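(* Let $A$ be a subset of a real vector space such that $\mathrm{we}(A)$ is a cone and every element of $\mathrm{we}(A)$ has a unique decomposition in terms of $A$. Then $A$ is a minimal set, and every element of $A$ is an extreme point of $\mathrm{we}(A)$.
   Context: $\mathrm{we}(A)$ is the set of all $\sum_{i=1}^n\alpha_ix_i$ with $n\in\mathbb N$, $\alpha_i\ge0$, $x_i\in A$. A cone is a subset $K$ closed under addition and multiplication by nonnegative scalars with $K\cap(-K)=\{0\}$. An element $x\in\mathrm{we}(A)$ has a unique decomposition in terms of $A$ if for all mutually different $x_1,\dots,x_n\in A$ and all $\alpha_i,\beta_i\ge0$, $x=\sum_i\alpha_ix_i=\sum_i\beta_ix_i$ implies $\alpha_i=\beta_i$ for all $i$. $A$ is minimal if $\mathrm{we}(A\setminus\{x\})\ne\mathrm{we}(A)$ for all $x\in A$. An element $x\in K\setminus\{0\}$ of a cone $K$ is an extreme point if whenever $y,z\in K\setminus\{0\}$ and $x=y+z$, then $y=\alpha x$ and $z=\beta x$ for some $\alpha,\beta>0$. *)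

From mathcomp Require Import all_boot all_order all_algebra.
From mathcomp Require Import classical_sets reals.
Set Implicit Arguments. Unset Strict Implicit. Unset Printing Implicit Defensive.
Import Order.TTheory GRing.Theory Num.Theory.
Local Open Scope ring_scope.
Local Open Scope classical_set_scope.

Section Defs.
Context {R : realType} {V : lmodType R}.

Definition we (A : set V) : set V :=
  [set x | exists (n : nat) (a : 'I_n -> R) (xs : 'I_n -> V),
     (forall i, 0 <= a i) /\ (forall i, A (xs i)) /\
     x = \sum_(i < n) a i *: xs i].

Definition is_cone (K : set V) : Prop :=
  (forall x y, K x -> K y -> K (x + y)) /\
  (forall (a : R) x, 0 <= a -> K x -> K (a *: x)) /\
  (forall x, K x -> K (- x) -> x = 0).

Definition unique_decomposition (A : set V) (x : V) : Prop :=
  forall (n : nat) (xs : 'I_n -> V) (a b : 'I_n -> R),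
    injective xs -> (forall i, A (xs i)) ->
    (forall i, 0 <= a i) -> (forall i, 0 <= b i) ->
    x = \sum_(i < n) a i *: xs i -> x = \sum_(i < n) b i *: xs i ->
    forall i, a i = b i.

Definition minimal_set (A : set V) : Prop :=
  forall x, A x -> we (A `\` [set x]) <> we A.

Definition extreme_point (K : set V) (x : V) : Prop :=
  K x /\ x <> 0 /\
  forall y z, K y -> y <> 0 -> K z -> z <> 0 -> x = y + z ->
    exists (a b : R), 0 < a /\ 0 < b /\ y = a *: x /\ z = b *: x.

End Defs.

From mathcomp Require Import all_boot all_order all_algebra.
From mathcomp Require Import classical_sets reals.
Import Order.TTheory GRing.Theory Num.Theory.
Local Open Scope ring_scope.
Local Open Scope classical_set_scope.

(* If [x] lies in [A], then [x = 1 x] is one decomposition of [x],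
   so by uniqueness every nonnegative combination of elements of [A] equal to
   [x] puts weight 0 on every element other than [x] and total weight 1 on
   [x]. Hence [x] is not a combination of [A \ {x}] (minimality), [x <> 0]
   (the empty combination has total weight 0), and if [x = y + z] with
   [y, z] in [we A], concatenating decompositions of [y] and [z] shows that
   both are nonnegative multiples of [x]. *)

Definition catf {T : Type} {n m : nat} (f : 'I_n -> T) (g : 'I_m -> T)
    (k : 'I_(n + m)) : T :=
  match split k with inl i => f i | inr j => g j end.

Lemma catf_lshift {T : Type} {n m : nat} (f : 'I_n -> T) (g : 'I_m -> T) i :
  catf f g (lshift m i) = f i.
Proof. by rewrite /catf (unsplitK (inl i)). Qed.

Lemma catf_rshift {T : Type} {n m : nat} (f : 'I_n -> T) (g : 'I_m -> T) j :
  catf f g (rshift n j) = g j.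
Proof. by rewrite /catf (unsplitK (inr j)). Qed.

Lemma catf_ind {T : Type} {n m : nat} (P : T -> Prop) {f : 'I_n -> T}
    {g : 'I_m -> T} :
  (forall i, P (f i)) -> (forall j, P (g j)) -> forall k, P (catf f g k).
Proof. by move=> Pf Pg k; rewrite /catf; case: split. Qed.

Section Combinations.
Context {R : realType} {V : lmodType R}.

Lemma sub_we {A : set V} : A `<=` we A.
Proof.
move=> x Ax; exists 1%N, (fun=> 1), (fun=> x).
by split=> //; split=> //; rewrite big_ord1 scale1r.
Qed.

Lemma sum_scale_catf n m (a : 'I_n -> R) (xs : 'I_n -> V) (b : 'I_m -> R)
    (ys : 'I_m -> V) :
  \sum_(i < n) a i *: xs i + \sum_(j < m) b j *: ys j =
  \sum_(k < n + m) catf a b k *: catf xs ys k.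
Proof.
by rewrite big_split_ord; congr (_ + _); apply: eq_bigr => i _;
  rewrite ?catf_lshift ?catf_rshift.
Qed.

Lemma sum_scale_regroup n (a : 'I_n -> R) (xs : 'I_n -> V) (u : seq V) :
  uniq u -> (forall i, xs i \in u) ->
  \sum_(i < n) a i *: xs i =
  \sum_(w <- u) (\sum_(i < n | xs i == w) a i) *: w.
Proof.
move=> uu inu; transitivity (\sum_(w <- u) \sum_(i < n | xs i == w) a i *: xs i).
  symmetry; under eq_bigr do rewrite big_mkcond.
  rewrite exchange_big /=; apply: eq_bigr => i _.
  rewrite (bigD1_seq (xs i)) //= eqxx big1 ?addr0 //.
  by move=> w /negbTE; rewrite eq_sym => ->.
by apply: eq_bigr => w _; rewrite scaler_suml; apply: eq_bigr => i /eqP ->.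
Qed.

Lemma sum_scale_supported n (a : 'I_n -> R) (xs : 'I_n -> V) x :
  (forall i, xs i != x -> a i = 0) ->
  \sum_(i < n) a i *: xs i = (\sum_(i < n | xs i == x) a i) *: x.
Proof.
move=> a0; rewrite scaler_suml (bigID (fun i => xs i == x)) /=.
rewrite [X in _ + X]big1 ?addr0 => [|i /a0 ->]; last by rewrite scale0r.
by apply: eq_bigr => i /eqP ->.
Qed.

Lemma unique_decomposition_seq (A : set V) x (u : seq V) (c d : V -> R) :
  unique_decomposition A x -> uniq u -> {in u, forall w, A w} ->
  {in u, forall w, 0 <= c w} -> {in u, forall w, 0 <= d w} ->
  x = \sum_(w <- u) c w *: w -> x = \sum_(w <- u) d w *: w ->
  {in u, c =1 d}.
Proof.
move=> uniqA uu Au c0 d0 Ec Ed w wu.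
pose xs (j : 'I_(size u)) := nth 0 u j.
have xs_u j : xs j \in u by exact: mem_nth.
have sum_xs (F : V -> V) : \sum_(w <- u) F w = \sum_(j < size u) F (xs j).
  by rewrite (big_nth 0) big_mkord.
have xs_inj : injective xs.
  by move=> i j /eqP; rewrite nth_uniq // => /eqP /val_inj.
rewrite !sum_xs in Ec Ed.
have := uniqA _ xs (c \o xs) (d \o xs) xs_inj (fun j => Au _ (xs_u j))
  (fun j => c0 _ (xs_u j)) (fun j => d0 _ (xs_u j)) Ec Ed
  (Ordinal (etrans (index_mem w u) wu)).
by rewrite /= /xs /= nth_index.
Qed.

Section UniqueDecomposition.
Variable A : set V.
Hypothesis A_unique : forall x, A x -> unique_decomposition A x.

Lemma combination_of_atom {x n} {a : 'I_n -> R} {xs : 'I_n -> V} :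
  A x -> (forall i, 0 <= a i) -> (forall i, A (xs i)) ->
  x = \sum_(i < n) a i *: xs i ->
  (forall i, xs i != x -> a i = 0) /\ \sum_(i < n | xs i == x) a i = 1.
Proof.
move=> Ax a0 Axs Ex.
pose u := undup (x :: [seq xs i | i <- enum 'I_n]).
have uu : uniq u by exact: undup_uniq.
have xs_u i : xs i \in u by rewrite mem_undup inE map_f ?orbT ?mem_enum.
have x_u : x \in u by rewrite mem_undup mem_head.
have Au : {in u, forall w, A w}.
  by move=> w; rewrite mem_undup inE => /orP[/eqP -> // | /mapP[i _ ->]].
pose weight w := \sum_(i < n | xs i == w) a i.
have weight0 w : 0 <= weight w by exact: sumr_ge0.
have weightE : {in u, weight =1 fun w => (w == x)%:R}.
  apply: (@unique_decomposition_seq A x u weight (fun w => (w == x)%:R)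
    (A_unique _ Ax) uu Au).
  - by move=> w _; exact: weight0.
  - by move=> w _; exact: ler0n.
  - by rewrite Ex; exact: sum_scale_regroup.
  rewrite (bigD1_seq x) //= eqxx scale1r big1 ?addr0 // => w /negbTE ->.
  exact: scale0r.
split; last by rewrite -/(weight x) weightE // eqxx.
move=> i xsi_x; have := weightE _ (xs_u i); rewrite (negbTE xsi_x).
by move/psumr_eq0P => -> // j _.
Qed.

Lemma atom_neq0 x : A x -> x <> 0.
Proof.
move=> Ax x0; have no_index : forall i : 'I_0, A 0 by case.
have x_empty : x = \sum_(i < 0) 0 *: (0 : V) by rewrite big_ord0.
have [_] := @combination_of_atom x 0 (fun=> 0) (fun=> 0) Ax
  (fun=> lexx 0) no_index x_empty.
by rewrite big_ord0 => /esym/eqP; rewrite oner_eq0.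
Qed.

Lemma unique_decomposition_minimal : minimal_set A.
Proof.
move=> x Ax weAx; have := sub_we _ Ax; rewrite -weAx.
move=> [n [a [xs [a0 [Axs Ex]]]]].
have [_] := combination_of_atom Ax a0 (fun i => (Axs i).1) Ex.
rewrite big_pred0 => [/esym/eqP|i]; first by rewrite oner_eq0.
by apply/negbTE/eqP; case: (Axs i).
Qed.

Lemma atom_summand_scale {x y z} :
  A x -> we A y -> we A z -> x = y + z ->
  exists2 c, 0 <= c & y = c *: x.
Proof.
move=> Ax [n [a [ys [a0 [Ays ->]]]]] [m [b [zs [b0 [Azs ->]]]]] Ex.
rewrite sum_scale_catf in Ex.
have [c_supp _] := combination_of_atom Ax (catf_ind (fun r => 0 <= r) a0 b0)
  (catf_ind A Ays Azs) Ex.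
exists (\sum_(i < n | ys i == x) a i); first exact: sumr_ge0.
apply: sum_scale_supported => i ysi_x.
by rewrite -(catf_lshift a b) c_supp ?catf_lshift.
Qed.

Lemma unique_decomposition_extreme x : A x -> extreme_point (we A) x.
Proof.
move=> Ax; split; first exact: sub_we.
split=> [|y z weAy y0 weAz z0 Ex]; first exact: atom_neq0.
have [a a0 ya] := atom_summand_scale Ax weAy weAz Ex.
have [b b0 zb] := atom_summand_scale Ax weAz weAy (etrans Ex (addrC _ _)).
exists a, b; rewrite !lt_def a0 b0 !andbT; do !split=> //.
- by apply/eqP => a_0; apply: y0; rewrite ya a_0 scale0r.
- by apply/eqP => b_0; apply: z0; rewrite zb b_0 scale0r.
Qed.

End UniqueDecomposition.
End Combinations.

Theorem mainTheorem19 (R : realType) (V : lmodType R) (A : set V) :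
  is_cone (we A) ->
  (forall x, we A x -> unique_decomposition A x) ->
  minimal_set A /\ (forall x, A x -> extreme_point (we A) x).
Proof.
move=> _ weA_unique.
have A_unique x : A x -> unique_decomposition A x.
  by move=> Ax; exact/weA_unique/sub_we.
split; first exact: unique_decomposition_minimal.
exact: unique_decomposition_extreme.
Qed.
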